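(* Let $G$ be a group, $N\unlhd G$, and $M=\mathcal{M}(G,N)$. Then (i) $M$ is residually finite if and only if $G$ is residually finite; (ii) the action of $M$ on its $\mathcal{L}$-classes is residually finite if and only if the group $G/N$ is residually finite.
   Context: For a group $G$ with normal subgroup $N$, let $\overline{N}=\{\overline{n}:n\in N\}$ be a disjoint copy of $N$ and define the monoid $\mathcal{M}(G,N)$ by the presentation with generators $G\cup\overline{N}\cup\{h\}$ (together with the multiplication tables of $G$ and $\overline{N}$, and a zero $0$) and relations $hn=\overline{n}h$ $(n\in N)$, $he_G=e_{\overline{N}}h=h$, $g\overline{n}=\overline{n}g=gh=h\overline{n}=0$ ($g\in G$, $n\in N$). A monoid/group is residually finite if distinct elements are separated by homomorphisms to finite monoids/groups. $x\mathcal{L}y$ iff $Mx=My$; $M$ acts on the right on $M/\mathcal{L}$ via $L_x\cdot m=L_{xm}$. This action is residually finite iff for all $(s,t)\notin\mathcal{L}$ there is a finite-index right congruence $\rho$ on $M$ with $\mathcal{L}\subseteq\rho$ and $(s,t)\notin\rho$. *)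

From Stdlib Require Import List Classical ClassicalEpsilon
  FunctionalExtensionality PropExtensionality ProofIrrelevance.
Import ListNotations.
Set Implicit Arguments.

Record Group := {
  gcar :> Type;
  gmul : gcar -> gcar -> gcar;
  gone : gcar;
  ginv : gcar -> gcar;
  gassoc : forall x y z, gmul x (gmul y z) = gmul (gmul x y) z;
  gmul1l : forall x, gmul gone x = x;
  gmul1r : forall x, gmul x gone = x;
  gmulVl : forall x, gmul (ginv x) x = gone;
  gmulVr : forall x, gmul x (ginv x) = gone }.
Arguments gmul {g}. Arguments gone {g}. Arguments ginv {g}.

Record Monoid := {
  mcar :> Type;
  mmul : mcar -> mcar -> mcar;
  mone : mcar;
  massoc : forall x y z, mmul x (mmul y z) = mmul (mmul x y) z;
  mmul1l : forall x, mmul mone x = x;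
  mmul1r : forall x, mmul x mone = x }.
Arguments mmul {m}. Arguments mone {m}.

Definition is_finite (T : Type) : Prop := exists l : list T, forall x, In x l.

Definition group_hom {G H : Group} (f : G -> H) : Prop :=
  forall x y, f (gmul x y) = gmul (f x) (f y).

Definition monoid_hom {M P : Monoid} (f : M -> P) : Prop :=
  (forall x y, f (mmul x y) = mmul (f x) (f y)) /\ f mone = mone.

Definition residually_finite_group (G : Group) : Prop :=
  forall x y : G, x <> y ->
    exists F : Group, is_finite F /\
      exists f : G -> F, group_hom f /\ f x <> f y.

Definition residually_finite_monoid (M : Monoid) : Prop :=
  forall x y : M, x <> y ->
    exists F : Monoid, is_finite F /\
      exists f : M -> F, monoid_hom f /\ f x <> f y.

Record MSet (M : Monoid) := {
  scar :> Type;
  sact : scar -> M -> scar;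
  sact1 : forall x, sact x mone = x;
  sactM : forall x a b, sact (sact x a) b = sact x (mmul a b) }.

Definition residually_finite_action (M : Monoid) (X : Type)
    (act : X -> M -> X) : Prop :=
  forall x y : X, x <> y ->
    exists Y : MSet M, is_finite Y /\
      exists f : X -> Y,
        (forall z m, f (act z m) = sact Y (f z) m) /\ f x <> f y.

Section Quot.
Variable T : Type.
Variable R : T -> T -> Prop.

Definition quot : Type := {P : T -> Prop | exists x, P = R x}.
Definition cls (x : T) : quot := exist _ (R x) (ex_intro _ x eq_refl).
Definition rep (q : quot) : T :=
  proj1_sig (constructive_indefinite_description _ (proj2_sig q)).

Lemma exist_eq_pred (P Q : T -> Prop) (p : exists x, P = R x)
  (q : exists x, Q = R x) : P = Q ->
  exist (fun P => exists x, P = R x) P p = exist (fun P => exists x, P = R x) Q q.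
Proof. intros ->. f_equal. apply proof_irrelevance. Qed.

Lemma cls_rep q : cls (rep q) = q.
Proof.
  destruct q as [P HP]. unfold rep, cls; simpl.
  destruct (constructive_indefinite_description _ HP) as [x Hx]; simpl.
  apply exist_eq_pred. now symmetry.
Qed.

Hypothesis Rrefl : forall x, R x x.
Hypothesis Rsym : forall x y, R x y -> R y x.
Hypothesis Rtrans : forall x y z, R x y -> R y z -> R x z.

Lemma cls_eq x y : R x y -> cls x = cls y.
Proof.
  intro H. apply exist_eq_pred. extensionality z. apply propositional_extensionality.
  split; intro; eauto.
Qed.

Lemma cls_inj x y : cls x = cls y -> R x y.
Proof.
  intro H. apply (f_equal (@proj1_sig _ _)) in H. simpl in H.
  rewrite H. apply Rrefl.
Qed.

Lemma rep_cls x : R (rep (cls x)) x.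
Proof. apply cls_inj. now rewrite cls_rep. Qed.

End Quot.

Definition normal_subgroup (G : Group) (N : G -> Prop) : Prop :=
  N gone /\ (forall x y, N x -> N y -> N (gmul x y)) /\
  (forall x, N x -> N (ginv x)) /\
  (forall g x, N x -> N (gmul (gmul (ginv g) x) g)).

Section GroupFacts.
Variable G : Group.

Lemma inv_uniq (x y : G) : gmul x y = gone -> y = ginv x.
Proof.
  intro H. rewrite <- (gmul1l G y), <- (gmulVl G x), <- gassoc, H, gmul1r.
  reflexivity.
Qed.

Lemma inv_inv (x : G) : ginv (ginv x) = x.
Proof. symmetry. apply inv_uniq. apply gmulVl. Qed.

Lemma inv_mul (x y : G) : ginv (gmul x y) = gmul (ginv y) (ginv x).
Proof.
  symmetry. apply inv_uniq.
  rewrite gassoc, <- (gassoc G x y), gmulVr, gmul1r, gmulVr. reflexivity.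
Qed.
End GroupFacts.

Section QuotientGroup.
Variable G : Group.
Variable N : G -> Prop.
Hypothesis HN : normal_subgroup G N.

Definition cosrel (a b : G) : Prop := N (gmul (ginv a) b).

Lemma cosrel_refl a : cosrel a a.
Proof. unfold cosrel. rewrite gmulVl. apply HN. Qed.

Lemma cosrel_sym a b : cosrel a b -> cosrel b a.
Proof.
  unfold cosrel; intro H. destruct HN as (_ & _ & Hi & _).
  apply Hi in H. rewrite inv_mul, inv_inv in H. exact H.
Qed.

Lemma cosrel_trans a b c : cosrel a b -> cosrel b c -> cosrel a c.
Proof.
  unfold cosrel; intros H1 H2. destruct HN as (_ & Hm & _ & _).
  pose proof (Hm _ _ H1 H2) as H.
  rewrite <- gassoc, (gassoc G b), gmulVr, gmul1l in H. exact H.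
Qed.

Lemma cosrel_mul a a' b b' :
  cosrel a a' -> cosrel b b' -> cosrel (gmul a b) (gmul a' b').
Proof.
  unfold cosrel; intros H1 H2. destruct HN as (_ & Hm & _ & Hc).
  pose proof (Hm _ _ (Hc b _ H1) H2) as H.
  replace (gmul (ginv (gmul a b)) (gmul a' b'))
    with (gmul (gmul (gmul (ginv b) (gmul (ginv a) a')) b) (gmul (ginv b) b'));
  [exact H|].
  rewrite inv_mul. rewrite <- !gassoc. f_equal. f_equal. f_equal.
  rewrite (gassoc G b), gmulVr, gmul1l. reflexivity.
Qed.

Lemma cosrel_inv a b : cosrel a b -> cosrel (ginv a) (ginv b).
Proof.
  unfold cosrel; intro H. destruct HN as (_ & _ & Hi & Hc).
  pose proof (Hc (ginv a) _ (Hi _ H)) as H'.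
  rewrite inv_inv, inv_mul, inv_inv in H'.
  rewrite inv_inv.
  replace (gmul a (ginv b)) with (gmul (gmul a (gmul (ginv b) a)) (ginv a)); [exact H'|].
  rewrite <- !gassoc, gmulVr, gmul1r. reflexivity.
Qed.

Definition qcar := quot cosrel.
Definition qmul (p q : qcar) : qcar := cls cosrel (gmul (rep p) (rep q)).
Definition qone : qcar := cls cosrel gone.
Definition qinv (p : qcar) : qcar := cls cosrel (ginv (rep p)).

Lemma qcls_eq a b : cosrel a b -> cls cosrel a = cls cosrel b.
Proof. apply cls_eq; eauto using cosrel_refl, cosrel_sym, cosrel_trans. Qed.

Lemma qrep_cls a : cosrel (rep (cls cosrel a)) a.
Proof. apply rep_cls; eauto using cosrel_refl, cosrel_sym, cosrel_trans. Qed.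

Lemma qmul_cls a b : qmul (cls cosrel a) (cls cosrel b) = cls cosrel (gmul a b).
Proof. apply qcls_eq, cosrel_mul; apply qrep_cls. Qed.

Lemma qinv_cls a : qinv (cls cosrel a) = cls cosrel (ginv a).
Proof. apply qcls_eq, cosrel_inv, qrep_cls. Qed.

Ltac qelim p := rewrite <- (cls_rep p); generalize (rep p); clear p; intro.

Lemma qassoc x y z : qmul x (qmul y z) = qmul (qmul x y) z.
Proof. qelim x; qelim y; qelim z. rewrite !qmul_cls, gassoc. reflexivity. Qed.
Lemma qmul1l x : qmul qone x = x.
Proof. qelim x. unfold qone. rewrite qmul_cls, gmul1l. reflexivity. Qed.
Lemma qmul1r x : qmul x qone = x.
Proof. qelim x. unfold qone. rewrite qmul_cls, gmul1r. reflexivity. Qed.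
Lemma qmulVl x : qmul (qinv x) x = qone.
Proof. qelim x. rewrite qinv_cls, qmul_cls, gmulVl. reflexivity. Qed.
Lemma qmulVr x : qmul x (qinv x) = qone.
Proof. qelim x. rewrite qinv_cls, qmul_cls, gmulVr. reflexivity. Qed.

Definition quotient_group : Group :=
  @Build_Group qcar qmul qone qinv qassoc qmul1l qmul1r qmulVl qmulVr.
End QuotientGroup.

Section MGN.
Variable G : Group.
Variable N : G -> Prop.

Inductive Gen : Type :=
  | gG : G -> Gen
  | gNbar : {n : G | N n} -> Gen
  | gh : Gen
  | gzero : Gen.

Definition word := list Gen.

Inductive defrel : word -> word -> Prop :=
  | r_Gtab (g1 g2 : G) : defrel [gG g1; gG g2] [gG (gmul g1 g2)]
  | r_Ntab (a b c : {n : G | N n}) :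
      proj1_sig c = gmul (proj1_sig a) (proj1_sig b) ->
      defrel [gNbar a; gNbar b] [gNbar c]
  | r_zero_l (x : Gen) : defrel [gzero; x] [gzero]
  | r_zero_r (x : Gen) : defrel [x; gzero] [gzero]
  | r_hn (n : {n : G | N n}) : defrel [gh; gG (proj1_sig n)] [gNbar n; gh]
  | r_heG : defrel [gh; gG gone] [gh]
  | r_eNh (e : {n : G | N n}) : proj1_sig e = gone -> defrel [gNbar e; gh] [gh]
  | r_gn (g : G) (n : {n : G | N n}) : defrel [gG g; gNbar n] [gzero]
  | r_ng (g : G) (n : {n : G | N n}) : defrel [gNbar n; gG g] [gzero]
  | r_gh (g : G) : defrel [gG g; gh] [gzero]
  | r_hn0 (n : {n : G | N n}) : defrel [gh; gNbar n] [gzero].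

Inductive cong : word -> word -> Prop :=
  | c_rel u v : defrel u v -> cong u v
  | c_refl u : cong u u
  | c_sym u v : cong u v -> cong v u
  | c_trans u v w : cong u v -> cong v w -> cong u w
  | c_ctx p u v q : cong u v -> cong (p ++ u ++ q) (p ++ v ++ q).

Lemma cong_app u u' v v' : cong u u' -> cong v v' -> cong (u ++ v) (u' ++ v').
Proof.
  intros H1 H2. apply c_trans with (u' ++ v).
  - exact (c_ctx [] v H1).
  - pose proof (c_ctx u' [] H2) as H. rewrite !app_nil_r in H. exact H.
Qed.

Definition Mcar := quot cong.
Definition Mmul (p q : Mcar) : Mcar := cls cong (rep p ++ rep q).
Definition Mone : Mcar := cls cong [].

Lemma Mcls_eq u v : cong u v -> cls cong u = cls cong v.
Proof. apply cls_eq; eauto using c_refl, c_sym, c_trans. Qed.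
Lemma Mrep_cls u : cong (rep (cls cong u)) u.
Proof. apply rep_cls; eauto using c_refl, c_sym, c_trans. Qed.
Lemma Mmul_cls u v : Mmul (cls cong u) (cls cong v) = cls cong (u ++ v).
Proof. apply Mcls_eq, cong_app; apply Mrep_cls. Qed.

Ltac melim p := rewrite <- (cls_rep p); generalize (rep p); clear p; intro.

Lemma Massoc x y z : Mmul x (Mmul y z) = Mmul (Mmul x y) z.
Proof. melim x; melim y; melim z. rewrite !Mmul_cls, app_assoc. reflexivity. Qed.
Lemma Mmul1l x : Mmul Mone x = x.
Proof. melim x. unfold Mone. rewrite Mmul_cls. reflexivity. Qed.
Lemma Mmul1r x : Mmul x Mone = x.
Proof. melim x. unfold Mone. rewrite Mmul_cls, app_nil_r. reflexivity. Qed.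

Definition MGN : Monoid := @Build_Monoid Mcar Mmul Mone Massoc Mmul1l Mmul1r.
End MGN.

Definition Lrel (M : Monoid) (x y : M) : Prop :=
  forall z, (exists a, z = mmul a x) <-> (exists b, z = mmul b y).

Definition Lclasses (M : Monoid) : Type := quot (@Lrel M).

Definition Lact (M : Monoid) (c : Lclasses M) (m : M) : Lclasses M :=
  cls (@Lrel M) (mmul (rep c) m).

From Stdlib Require Import List ClassicalEpsilon FunctionalExtensionality ProofIrrelevance.
Import ListNotations.
Set Implicit Arguments.

(** Every element of M(G,N) has a unique normal form 1, g, n̄, h g or 0 (push
   the elements of N to the left of h through h n = n̄ h), so M(G,N) is a
   submonoid of an explicit monoid built from three copies of G.  For (i), G
   sits multiplicatively inside M(G,N), and a homomorphism from G to a finite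
   group induces one between the corresponding explicit monoids.  For (ii),
   the L-classes of M(G,N) are {1}, G, N̄, {0} and the sets h(Ng) indexed by
   the cosets of N, on which M acts through right multiplication of G/N.
   Hence finite quotients of G/N give finite M-sets separating L-classes;
   conversely an equivariant map into a finite M-set turns the action of G/N
   on the images of the classes h(Ng) into a map from G/N into a finite
   transformation monoid, which separates cosets. *)

Lemma is_finite_inj_in_list (A T : Type) (i : A -> T) (l : list T) :
  (forall x y, i x = i y -> x = y) -> (forall x, In (i x) l) -> is_finite A.
Proof.
  intros Hinj Hl.
  exists (flat_map (fun t => match excluded_middle_informative (exists a, i a = t) with
     | left H => [proj1_sig (constructive_indefinite_description _ H)]
     | right _ => [] end) l).
  intro x. apply in_flat_map. exists (i x). split; [apply Hl|].
  destruct (excluded_middle_informative _) as [H|H].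
  - destruct (constructive_indefinite_description _ H) as [y Hy]; simpl. left; auto.
  - exfalso; apply H; eauto.
Qed.

Fixpoint lists_of_length {T} (l : list T) (n : nat) : list (list T) :=
  match n with
  | 0 => [[]]
  | S n => flat_map (fun s => map (fun y => y :: s) l) (lists_of_length l n)
  end.

Lemma in_lists_of_length T (l : list T) s :
  (forall x, In x s -> In x l) -> In s (lists_of_length l (length s)).
Proof.
  induction s as [|a s IH]; simpl; intros H; [left; auto|].
  apply in_flat_map. exists s. split.
  - apply IH; intros; apply H; right; auto.
  - apply (in_map (fun y => y :: s)). apply H; left; auto.
Qed.

Lemma map_eq_in T U (F F' : T -> U) l x : map F l = map F' l -> In x l -> F x = F' x.
Proof.
  induction l; simpl; intros H Hx; [contradiction|].
  injection H; intros. destruct Hx; subst; auto.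
Qed.

Lemma is_finite_fun T : is_finite T -> is_finite (T -> T).
Proof.
  intros [l Hl].
  apply (@is_finite_inj_in_list _ _ (fun F => map F l) (lists_of_length l (length l))).
  - intros F F' H. extensionality x. exact (map_eq_in F F' l x H (Hl x)).
  - intro F. rewrite <- (length_map F l). apply in_lists_of_length. intros x _. apply Hl.
Qed.

Lemma is_finite_sig T (P : T -> Prop) : is_finite T -> is_finite {x | P x}.
Proof.
  intros [l Hl]. apply (@is_finite_inj_in_list _ _ (@proj1_sig _ _) l).
  - intros [x p] [y q]; simpl; intro; subst. f_equal; apply proof_irrelevance.
  - intros; apply Hl.
Qed.

Lemma group_hom_one (G H : Group) (f : G -> H) : group_hom f -> f gone = gone.
Proof.
  intro Hf. pose proof (Hf gone gone) as E. rewrite gmul1l in E.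
  rewrite <- (gmulVl H (f gone)). rewrite E at 3.
  rewrite gassoc, gmulVl, gmul1l. reflexivity.
Qed.

Definition trivial_group : Group.
Proof.
  refine (@Build_Group unit (fun _ _ => tt) tt (fun _ => tt) _ _ _ _ _);
  intros; repeat match goal with x : unit |- _ => destruct x end; reflexivity.
Defined.

Lemma trivial_group_finite : is_finite trivial_group.
Proof. exists [tt]. intros []. left; reflexivity. Qed.

Lemma trivial_group_hom (G : Group) : group_hom (fun _ : G => (tt : trivial_group)).
Proof. intros x y. reflexivity. Qed.

Definition transformation_monoid (T : Type) : Monoid :=
  @Build_Monoid (T -> T) (fun f g x => g (f x)) (fun x => x)
    (fun _ _ _ => eq_refl) (fun _ => eq_refl) (fun _ => eq_refl).

Section ImageGroup.
Variables (G : Group) (P : Monoid) (a : G -> P).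
Hypothesis a_mul : forall x y, a (gmul x y) = mmul (a x) (a y).

Definition image_car := {p : P | exists g, p = a g}.
Definition image_of (g : G) : image_car := exist _ (a g) (ex_intro _ g eq_refl).

Definition image_mul (p q : image_car) : image_car.
Proof.
  refine (exist _ (mmul (proj1_sig p) (proj1_sig q)) _).
  destruct p as [p [g ->]]; destruct q as [q [h ->]]; simpl.
  exists (gmul g h). rewrite a_mul. reflexivity.
Defined.

Definition image_rep (p : image_car) : G :=
  proj1_sig (constructive_indefinite_description _ (proj2_sig p)).

Lemma image_rep_spec p : proj1_sig p = a (image_rep p).
Proof. unfold image_rep. destruct (constructive_indefinite_description _ _); auto. Qed.

Definition image_inv (p : image_car) : image_car := image_of (ginv (image_rep p)).
Definition image_one : image_car := image_of gone.

Lemma image_eq (p q : image_car) : proj1_sig p = proj1_sig q -> p = q.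
Proof. destruct p, q; simpl; intro; subst; f_equal; apply proof_irrelevance. Qed.

Lemma image_assoc x y z : image_mul x (image_mul y z) = image_mul (image_mul x y) z.
Proof. apply image_eq; simpl; apply massoc. Qed.
Lemma image_mul1l x : image_mul image_one x = x.
Proof. apply image_eq; simpl. rewrite (image_rep_spec x), <- a_mul, gmul1l; auto. Qed.
Lemma image_mul1r x : image_mul x image_one = x.
Proof. apply image_eq; simpl. rewrite (image_rep_spec x), <- a_mul, gmul1r; auto. Qed.
Lemma image_mulVl x : image_mul (image_inv x) x = image_one.
Proof. apply image_eq; simpl. rewrite (image_rep_spec x), <- a_mul, gmulVl; auto. Qed.
Lemma image_mulVr x : image_mul x (image_inv x) = image_one.
Proof. apply image_eq; simpl. rewrite (image_rep_spec x), <- a_mul, gmulVr; auto. Qed.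

(* Although [a] need not preserve units, its image is a group with unit [a 1]. *)
Definition image_group : Group :=
  @Build_Group image_car image_mul image_one image_inv
    image_assoc image_mul1l image_mul1r image_mulVl image_mulVr.

Lemma image_of_hom : group_hom (image_of : G -> image_group).
Proof. intros x y. apply image_eq. simpl. apply a_mul. Qed.

End ImageGroup.

Lemma residually_finite_group_of_mul_maps (G : Group) :
  (forall x y : G, x <> y -> exists P : Monoid, is_finite P /\
     exists a : G -> P, (forall u v, a (gmul u v) = mmul (a u) (a v)) /\ a x <> a y) ->
  residually_finite_group G.
Proof.
  intros Hsep x y Hxy.
  destruct (Hsep x y Hxy) as (P & HP & a & a_mul & Ha).
  exists (@image_group G P a a_mul). split; [apply is_finite_sig, HP|].
  exists (@image_of G P a). split; [apply image_of_hom|].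
  intro E. apply Ha. exact (f_equal (@proj1_sig _ _) E).
Qed.

Lemma residually_finite_monoid_of_inj_hom (M P : Monoid) (f : M -> P) :
  monoid_hom f -> (forall x y, f x = f y -> x = y) ->
  residually_finite_monoid P -> residually_finite_monoid M.
Proof.
  intros [f_mul f_one] f_inj RF x y Hxy.
  destruct (RF (f x) (f y)) as (F & HF & g & [g_mul g_one] & Hg); [intro E; auto|].
  exists F. split; [exact HF|]. exists (fun m => g (f m)). split; [split|exact Hg].
  - intros u v. rewrite f_mul. apply g_mul.
  - rewrite f_one. exact g_one.
Qed.

Section NormalSubgroup.
Variables (G : Group) (N : G -> Prop).
Hypothesis HN : normal_subgroup G N.

Lemma normal_one : N gone. Proof. apply HN. Qed.
Lemma normal_mul x y : N x -> N y -> N (gmul x y). Proof. apply HN. Qed.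
Lemma normal_inv x : N x -> N (ginv x). Proof. apply HN. Qed.
Lemma normal_conj g x : N x -> N (gmul (gmul (ginv g) x) g). Proof. apply HN. Qed.

Lemma cosrel_normal_r g g' : cosrel G N g g' -> N (gmul g' (ginv g)).
Proof.
  intro H. pose proof (normal_conj (ginv g) H) as H'.
  rewrite inv_inv, gassoc, gmulVr, gmul1l in H'. exact H'.
Qed.

Lemma cosrel_normal_l g g' : cosrel G N g g' -> N (gmul g (ginv g')).
Proof.
  intro H. pose proof (normal_inv (cosrel_normal_r H)) as H'.
  rewrite inv_mul, inv_inv in H'. exact H'.
Qed.

Lemma cosrel_normal_mull n g : N n -> cosrel G N (gmul n g) g.
Proof. intro H. unfold cosrel. rewrite inv_mul. apply normal_conj, normal_inv, H. Qed.

End NormalSubgroup.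

Lemma cosrel_mul2l (G : Group) (N : G -> Prop) k u v :
  cosrel G N u v -> cosrel G N (gmul k u) (gmul k v).
Proof.
  unfold cosrel. rewrite inv_mul, <- gassoc, (gassoc _ (ginv k)), gmulVl, gmul1l. auto.
Qed.

(** * Normal forms *)

(* [NH g] is the normal form h g and [NBar n] the normal form n̄. *)
Inductive NF (H : Type) := NOne | NG (g : H) | NBar (n : H) | NH (g : H) | NZero.
Arguments NOne {H}. Arguments NZero {H}. Arguments NG {H}. Arguments NBar {H}. Arguments NH {H}.

Definition nf_mul {H : Group} (x y : NF H) : NF H :=
  match x, y with
  | NOne, y => y
  | x, NOne => x
  | NG a, NG b => NG (gmul a b)
  | NBar a, NBar b => NBar (gmul a b)
  | NBar a, NH b => NH (gmul a b)
  | NH a, NG b => NH (gmul a b)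
  | _, _ => NZero
  end.

Lemma nf_mul_assoc (H : Group) (x y z : NF H) : nf_mul x (nf_mul y z) = nf_mul (nf_mul x y) z.
Proof. destruct x, y, z; simpl; try reflexivity; rewrite gassoc; reflexivity. Qed.
Lemma nf_mul1l (H : Group) (x : NF H) : nf_mul NOne x = x.
Proof. reflexivity. Qed.
Lemma nf_mul1r (H : Group) (x : NF H) : nf_mul x NOne = x.
Proof. destruct x; reflexivity. Qed.

Definition nf_monoid (H : Group) : Monoid :=
  @Build_Monoid (NF H) nf_mul NOne (@nf_mul_assoc H) (@nf_mul1l H) (@nf_mul1r H).

Definition nf_map {H K : Type} (f : H -> K) (x : NF H) : NF K :=
  match x with
  | NOne => NOne | NG g => NG (f g) | NBar g => NBar (f g) | NH g => NH (f g) | NZero => NZero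
  end.

Lemma nf_map_hom (H K : Group) (f : H -> K) : group_hom f ->
  monoid_hom (nf_map f : nf_monoid H -> nf_monoid K).
Proof.
  intro Hf. split; [|reflexivity].
  intros x y; destruct x, y; simpl; try reflexivity; rewrite Hf; reflexivity.
Qed.

Lemma nf_finite (F : Type) : is_finite F -> is_finite (NF F).
Proof.
  intros [l Hl]. exists (NOne :: NZero :: map (@NG F) l ++ map (@NBar F) l ++ map (@NH F) l).
  intro x; destruct x; simpl; auto; right; right; rewrite !in_app_iff; auto using in_map.
Qed.

Lemma nf_monoid_residually_finite (G : Group) :
  residually_finite_group G -> residually_finite_monoid (nf_monoid G).
Proof.
  intros RF u v Huv.
  assert (by_trivial : (forall f : G -> trivial_group, nf_map f u <> nf_map f v) ->
     exists F : Monoid, is_finite F /\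
       exists f : nf_monoid G -> F, monoid_hom f /\ f u <> f v).
  { intro H. exists (nf_monoid trivial_group).
    split; [apply nf_finite, trivial_group_finite|].
    exists (nf_map (fun _ => tt)). split; [apply nf_map_hom, trivial_group_hom|]. apply H. }
  destruct u as [|g|g|g|], v as [|g'|g'|g'|]; try (apply by_trivial; intros f; discriminate);
  try (exfalso; apply Huv; reflexivity);
  (assert (Hg : g <> g') by (intro; subst; apply Huv; reflexivity);
   destruct (RF _ _ Hg) as (F & HF & f & Hf & Hfg);
   exists (nf_monoid F); split; [apply nf_finite, HF|];
   exists (nf_map f); split; [apply nf_map_hom, Hf|]; simpl; intro E; injection E; auto).
Qed.

Section MGNNormalForm.
Variables (G : Group) (N : G -> Prop).
Hypothesis HN : normal_subgroup G N.

Local Notation word := (word G N).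
Local Notation GG := (gG G N).
Local Notation NB := (gNbar G N).
Local Notation HH := (gh G N).
Local Notation ZZ := (gzero G N).

Definition eval_gen (a : Gen G N) : NF G :=
  match a with
  | gG _ _ g => NG g | gNbar _ _ n => NBar (proj1_sig n) | gh _ _ => NH gone | gzero _ _ => NZero
  end.

Fixpoint eval_word (w : word) : NF G :=
  match w with [] => NOne | a :: w => nf_mul (eval_gen a) (eval_word w) end.

Lemma eval_word_app u v : eval_word (u ++ v) = nf_mul (eval_word u) (eval_word v).
Proof. induction u; simpl; auto. rewrite IHu, nf_mul_assoc; auto. Qed.

Lemma eval_word_defrel u v : defrel u v -> eval_word u = eval_word v.
Proof.
  destruct 1; simpl; try reflexivity.
  - rewrite H; reflexivity.
  - destruct x; reflexivity.
  - destruct x; reflexivity.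
  - rewrite gmul1l, gmul1r; reflexivity.
  - rewrite gmul1l; reflexivity.
  - rewrite H, gmul1r; reflexivity.
Qed.

Lemma eval_word_cong u v : cong u v -> eval_word u = eval_word v.
Proof.
  induction 1; auto using eval_word_defrel; try congruence.
  rewrite !eval_word_app, IHcong; auto.
Qed.

Definition nf_valid (u : NF G) : Prop := match u with NBar n => N n | _ => True end.

Lemma nf_valid_mul u v : nf_valid u -> nf_valid v -> nf_valid (nf_mul u v).
Proof. destruct u, v; simpl; auto. apply (normal_mul HN). Qed.

Lemma nf_valid_eval w : nf_valid (eval_word w).
Proof.
  induction w as [|a w IH]; simpl; [exact I|]. apply nf_valid_mul; auto.
  destruct a; simpl; auto. apply (proj2_sig s).
Qed.

(* On [NBar n] with [n] outside [N] this is junk; it is only used on valid forms. *)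
Definition nf_word (u : NF G) : word :=
  match u with
  | NOne => []
  | NG g => [GG g]
  | NBar n => match excluded_middle_informative (N n) with
              | left p => [NB (exist _ n p)] | right _ => [] end
  | NH g => [HH; GG g]
  | NZero => [ZZ]
  end.
Arguments nf_word : simpl never.

Lemma nf_word_one : nf_word NOne = []. Proof. reflexivity. Qed.
Lemma nf_word_G g : nf_word (NG g) = [GG g]. Proof. reflexivity. Qed.
Lemma nf_word_H g : nf_word (NH g) = [HH; GG g]. Proof. reflexivity. Qed.
Lemma nf_word_zero : nf_word NZero = [ZZ]. Proof. reflexivity. Qed.

Lemma nf_word_Bar n (p : N n) : nf_word (NBar n) = [NB (exist _ n p)].
Proof.
  unfold nf_word. destruct excluded_middle_informative; [|contradiction].
  do 2 f_equal. apply subset_eq_compat; reflexivity.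
Qed.

Lemma nf_word_Bar_sig (n : {n | N n}) : nf_word (NBar (proj1_sig n)) = [NB n].
Proof. destruct n as [n p]. apply nf_word_Bar. Qed.

Lemma eval_nf_word u : nf_valid u -> eval_word (nf_word u) = u.
Proof.
  intro H; destruct u;
  [rewrite nf_word_one | rewrite nf_word_G | rewrite (nf_word_Bar H)
  | rewrite nf_word_H | rewrite nf_word_zero]; simpl; try reflexivity.
  rewrite gmul1l; reflexivity.
Qed.

Ltac rel_rw p q H := eapply c_trans; [exact (c_ctx p q (c_rel H)) | simpl].
Ltac rel_rw_rev p q H := eapply c_trans; [exact (c_ctx p q (c_sym (c_rel H))) | simpl].

(* h h = h h e = h ē h = 0 h = 0 *)
Lemma cong_hh : cong [HH; HH] [ZZ].
Proof.
  rel_rw_rev [HH] (@nil (Gen G N)) (r_heG G N).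
  rel_rw [HH] (@nil (Gen G N)) (r_hn G N (exist _ gone (normal_one HN))).
  rel_rw (@nil (Gen G N)) [HH] (r_hn0 G N (exist _ gone (normal_one HN))).
  apply c_rel, r_zero_l.
Qed.

Lemma cong_cons_nf_word a u : nf_valid u ->
  cong (a :: nf_word u) (nf_word (nf_mul (eval_gen a) u)).
Proof.
  intro Hu.
  destruct a as [g|n| |]; destruct u as [|g'|m|g'|]; simpl in Hu; cbn [nf_mul eval_gen];
    repeat rewrite ?nf_word_one, ?nf_word_G, ?nf_word_H, ?nf_word_zero.
  - apply c_refl.
  - apply c_rel, r_Gtab.
  - rewrite (nf_word_Bar Hu). apply c_rel, r_gn.
  - rel_rw (@nil (Gen G N)) [GG g'] (r_gh G N g). apply c_rel, r_zero_l.
  - apply c_rel, r_zero_r.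
  - rewrite nf_word_Bar_sig. apply c_refl.
  - apply c_rel, r_ng.
  - rewrite (nf_word_Bar Hu), (nf_word_Bar (normal_mul HN _ _ (proj2_sig n) Hu)).
    apply c_rel, r_Ntab. reflexivity.
  - apply c_sym. rel_rw_rev [HH] (@nil (Gen G N)) (r_Gtab G N (proj1_sig n) g').
    rel_rw (@nil (Gen G N)) [GG g'] (r_hn G N n). apply c_refl.
  - apply c_rel, r_zero_r.
  - apply c_sym, c_rel, r_heG.
  - rewrite gmul1l. apply c_refl.
  - rewrite (nf_word_Bar Hu). apply c_rel, r_hn0.
  - eapply c_trans; [exact (c_ctx (@nil (Gen G N)) [GG g'] cong_hh)|].
    apply c_rel, r_zero_l.
  - apply c_rel, r_zero_r.
  - apply c_refl.
  - apply c_rel, r_zero_l.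
  - rewrite (nf_word_Bar Hu). apply c_rel, r_zero_l.
  - rel_rw (@nil (Gen G N)) [GG g'] (r_zero_l HH). apply c_rel, r_zero_l.
  - apply c_rel, r_zero_l.
Qed.

Lemma cong_nf_word_eval w : cong w (nf_word (eval_word w)).
Proof.
  induction w as [|a w IH]; simpl.
  - rewrite nf_word_one; apply c_refl.
  - pose proof (c_ctx [a] (@nil (Gen G N)) IH) as H. rewrite !app_nil_r in H.
    eapply c_trans; [exact H|]. apply cong_cons_nf_word, nf_valid_eval.
Qed.

Local Notation M := (MGN G N).

Definition normal_form (x : M) : NF G := eval_word (rep x).
Definition of_normal_form (u : NF G) : M := cls (@cong G N) (nf_word u).

Lemma normal_form_cls w : normal_form (cls (@cong G N) w) = eval_word w.
Proof. apply eval_word_cong, Mrep_cls. Qed.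

Lemma normal_form_hom : monoid_hom (normal_form : M -> nf_monoid G).
Proof.
  split.
  - intros x y. change (normal_form (cls (@cong G N) (rep x ++ rep y))
                        = nf_mul (normal_form x) (normal_form y)).
    rewrite normal_form_cls, eval_word_app. reflexivity.
  - change (normal_form (cls (@cong G N) []) = NOne). apply normal_form_cls.
Qed.

Lemma normal_form_mul (x y : M) :
  normal_form (mmul x y) = nf_mul (normal_form x) (normal_form y).
Proof. apply normal_form_hom. Qed.

Lemma normal_form_valid x : nf_valid (normal_form x).
Proof. apply nf_valid_eval. Qed.

Lemma normal_form_inj (x y : M) : normal_form x = normal_form y -> x = y.
Proof.
  intro H. rewrite <- (cls_rep x), <- (cls_rep y). apply Mcls_eq.
  eapply c_trans; [apply cong_nf_word_eval|].
  unfold normal_form in H. rewrite H. apply c_sym, cong_nf_word_eval.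
Qed.

Lemma normal_form_of_normal_form u : nf_valid u -> normal_form (of_normal_form u) = u.
Proof. intro H. unfold of_normal_form. rewrite normal_form_cls. apply eval_nf_word, H. Qed.

Lemma of_normal_form_mul u v : nf_valid u -> nf_valid v ->
  of_normal_form (nf_mul u v) = mmul (of_normal_form u) (of_normal_form v).
Proof.
  intros Hu Hv. apply normal_form_inj.
  rewrite normal_form_mul, !normal_form_of_normal_form; auto using nf_valid_mul.
Qed.

End MGNNormalForm.

Lemma MGN_residually_finite_iff (G : Group) (N : G -> Prop) (HN : normal_subgroup G N) :
  residually_finite_monoid (MGN G N) <-> residually_finite_group G.
Proof.
  split; intro RF.
  - apply residually_finite_group_of_mul_maps. intros g g' Hg.
    set (emb := fun k => of_normal_form G N (NG k)).
    destruct (RF (emb g) (emb g')) as (P & HP & f & [f_mul _] & Hf).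
    { intro E. apply (f_equal (@normal_form G N)) in E. unfold emb in E.
      rewrite !normal_form_of_normal_form in E by exact I. injection E; auto. }
    exists P. split; [exact HP|]. exists (fun k => f (emb k)). split; [|exact Hf].
    intros u v. rewrite <- f_mul. unfold emb. rewrite <- (of_normal_form_mul HN); trivial; exact I.
  - apply (residually_finite_monoid_of_inj_hom (normal_form_hom G N)).
    + apply (normal_form_inj HN).
    + apply nf_monoid_residually_finite, RF.
Qed.

(** * L-classes and the action on them *)

Section GreenL.
Variable M : Monoid.

Lemma Lrel_refl (x : M) : Lrel M x x.
Proof. intro z. reflexivity. Qed.

Lemma Lrel_sym (x y : M) : Lrel M x y -> Lrel M y x.
Proof. intros H z. symmetry. apply H. Qed.

Lemma Lrel_trans (x y z : M) : Lrel M x y -> Lrel M y z -> Lrel M x z.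
Proof. intros H1 H2 w. rewrite (H1 w). apply H2. Qed.

Lemma Lrel_intro (x y : M) :
  (exists a, x = mmul a y) -> (exists b, y = mmul b x) -> Lrel M x y.
Proof.
  intros [a Ha] [b Hb] z; split; intros [c Hc].
  - exists (mmul c a). rewrite Hc, Ha, massoc. reflexivity.
  - exists (mmul c b). rewrite Hc, Hb, massoc. reflexivity.
Qed.

Lemma Lrel_factor (x y : M) : Lrel M x y -> exists a, x = mmul a y.
Proof. intro H. apply (H x). exists mone. rewrite mmul1l. reflexivity. Qed.

Lemma Lrel_mulr (x y m : M) : Lrel M x y -> Lrel M (mmul x m) (mmul y m).
Proof.
  intros H. apply Lrel_intro.
  - destruct (Lrel_factor H) as [c Hc]. exists c. rewrite Hc, massoc. reflexivity.
  - destruct (Lrel_factor (Lrel_sym H)) as [c Hc]. exists c. rewrite Hc, massoc. reflexivity.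
Qed.

Lemma Lclass_eq (x y : M) : Lrel M x y -> cls (Lrel M) x = cls (Lrel M) y.
Proof. apply cls_eq; [apply Lrel_sym | apply Lrel_trans]. Qed.

Lemma Lclass_inj (x y : M) : cls (Lrel M) x = cls (Lrel M) y -> Lrel M x y.
Proof. apply cls_inj, Lrel_refl. Qed.

Lemma Lact_cls (x m : M) : Lact (cls (Lrel M) x) m = cls (Lrel M) (mmul x m).
Proof. apply Lclass_eq, Lrel_mulr, rep_cls, Lrel_refl. Qed.

End GreenL.

Section MGNLClasses.
Variables (G : Group) (N : G -> Prop).
Hypothesis HN : normal_subgroup G N.
Local Notation M := (MGN G N).

Definition nf_Lrel (u v : NF G) : Prop :=
  match u, v with
  | NOne, NOne | NG _, NG _ | NBar _, NBar _ | NZero, NZero => True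
  | NH g, NH g' => cosrel G N g g'
  | _, _ => False
  end.

Definition nf_lfactor (u v : NF G) : NF G :=
  match u, v with
  | NG g, NG g' => NG (gmul g (ginv g'))
  | NBar g, NBar g' | NH g, NH g' => NBar (gmul g (ginv g'))
  | _, _ => NOne
  end.

Lemma nf_Lrel_sym u v : nf_Lrel u v -> nf_Lrel v u.
Proof. destruct u, v; simpl; auto. apply (cosrel_sym HN). Qed.

Lemma nf_lfactor_spec u v : nf_Lrel u v -> nf_valid G N u -> nf_valid G N v ->
  nf_valid G N (nf_lfactor u v) /\ u = nf_mul (nf_lfactor u v) v.
Proof.
  assert (cancel : forall g g' : G, g = gmul (gmul g (ginv g')) g').
  { intros g g'. rewrite <- gassoc, gmulVl, gmul1r. reflexivity. }
  destruct u as [|g|g|g|], v as [|g'|g'|g'|]; simpl; try contradiction;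
    intros HL Hu Hv; split; try exact I; try reflexivity; try (f_equal; apply cancel).
  - apply (normal_mul HN); [exact Hu | apply (normal_inv HN), Hv].
  - apply (cosrel_normal_l HN), HL.
Qed.

Lemma nf_Lrel_of_factors u v b c : nf_valid G N b -> nf_valid G N c ->
  u = nf_mul b v -> v = nf_mul c u -> nf_Lrel u v.
Proof.
  intros Hb Hc H1 H2.
  destruct u, v, b, c; simpl in *; try discriminate; try exact I;
  repeat match goal with H : NH _ = NH _ |- _ => injection H as H end; subst;
  try apply (cosrel_refl HN); apply (cosrel_normal_mull HN); auto.
Qed.

Lemma Lrel_normal_form (x y : M) :
  Lrel M x y <-> nf_Lrel (normal_form x) (normal_form y).
Proof.
  split; intro H.
  - destruct (Lrel_factor H) as [b Hb]. destruct (Lrel_factor (Lrel_sym H)) as [c Hc].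
    apply (@nf_Lrel_of_factors _ _ (normal_form b) (normal_form c));
      try apply (normal_form_valid HN).
    + rewrite Hb at 1. apply normal_form_mul.
    + rewrite Hc at 1. apply normal_form_mul.
  - assert (factor : forall x y : M, nf_Lrel (normal_form x) (normal_form y) ->
              exists a, x = mmul a y).
    { clear x y H. intros x y H.
      destruct (nf_lfactor_spec _ _ H (normal_form_valid HN x) (normal_form_valid HN y))
        as [Hv Hxy].
      exists (of_normal_form G N (nf_lfactor (normal_form x) (normal_form y))).
      apply (normal_form_inj HN). rewrite normal_form_mul, normal_form_of_normal_form; auto. }
    apply Lrel_intro; apply factor; auto using nf_Lrel_sym.
Qed.

End MGNLClasses.

(* The L-classes of M(G,N), with the class of h g recorded through the image of g in Q. *)
Inductive LPoint (Q : Type) := LOne | LG | LBar | LH (t : Q) | LZero.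
Arguments LOne {Q}. Arguments LG {Q}. Arguments LBar {Q}. Arguments LH {Q}. Arguments LZero {Q}.

Lemma LPoint_finite (Q : Type) : is_finite Q -> is_finite (LPoint Q).
Proof.
  intros [l Hl]. exists (LOne :: LG :: LBar :: LZero :: map (@LH Q) l).
  intro x; destruct x; simpl; auto 6 using in_map.
Qed.

Section LPointAction.
Variables (G : Group) (N : G -> Prop).
Hypothesis HN : normal_subgroup G N.
Variables (Q : Group) (q : G -> Q).
Hypothesis q_hom : group_hom q.
Hypothesis q_N : forall n, N n -> q n = gone.
Local Notation M := (MGN G N).

Definition lpoint (u : NF G) : LPoint Q :=
  match u with
  | NOne => LOne | NG _ => LG | NBar _ => LBar | NH g => LH (q g) | NZero => LZero
  end.

Definition lpoint_act (p : LPoint Q) (v : NF G) : LPoint Q :=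
  match p with
  | LOne => lpoint v
  | LG => match v with NOne | NG _ => LG | _ => LZero end
  | LBar => match v with NOne | NBar _ => LBar | NH g => LH (q g) | _ => LZero end
  | LH t => match v with NOne => LH t | NG g => LH (gmul t (q g)) | _ => LZero end
  | LZero => LZero
  end.

Lemma lpoint_mul u v : nf_valid G N u -> lpoint (nf_mul u v) = lpoint_act (lpoint u) v.
Proof.
  intro Hu. destruct u, v; simpl in *; try reflexivity; rewrite q_hom; try reflexivity.
  rewrite (q_N Hu), gmul1l; auto.
Qed.

Lemma lpoint_act_one p : lpoint_act p NOne = p.
Proof. destruct p; reflexivity. Qed.

Lemma lpoint_act_mul p u v : nf_valid G N u ->
  lpoint_act (lpoint_act p u) v = lpoint_act p (nf_mul u v).
Proof.
  intro Hu. destruct p.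
  - symmetry. apply lpoint_mul, Hu.
  - destruct u, v; reflexivity.
  - destruct u, v; simpl in *; try reflexivity; rewrite q_hom;
      try rewrite (q_N Hu), gmul1l; reflexivity.
  - destruct u, v; simpl in *; try reflexivity. rewrite q_hom, gassoc; reflexivity.
  - reflexivity.
Qed.

Lemma lpoint_nf_Lrel u v : nf_Lrel G N u v -> lpoint u = lpoint v.
Proof.
  destruct u as [|g|g|g|], v as [|g'|g'|g'|]; simpl; try contradiction; try reflexivity.
  intro H. f_equal. replace g' with (gmul g (gmul (ginv g) g')).
  - rewrite q_hom, (q_N H), gmul1r; reflexivity.
  - rewrite gassoc, gmulVr, gmul1l; reflexivity.
Qed.

Definition lpoint_mset : MSet M.
Proof.
  refine (@Build_MSet M (LPoint Q) (fun p m => lpoint_act p (normal_form m)) _ _).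
  - intro p. rewrite (proj2 (normal_form_hom G N)). apply lpoint_act_one.
  - intros p a b. rewrite normal_form_mul. apply lpoint_act_mul, (normal_form_valid HN).
Defined.

Definition Lclass_lpoint (c : Lclasses M) : LPoint Q := lpoint (normal_form (rep c)).

Lemma Lclass_lpoint_Lact c m :
  Lclass_lpoint (Lact c m) = sact lpoint_mset (Lclass_lpoint c) m.
Proof.
  unfold Lclass_lpoint, Lact.
  rewrite (lpoint_nf_Lrel _ _ (proj1 (Lrel_normal_form HN _ _) (rep_cls _ (@Lrel_refl M) _))).
  rewrite normal_form_mul.
  apply lpoint_mul, (normal_form_valid HN).
Qed.

Lemma Lclasses_separated_by_lpoint (c d : Lclasses M) : is_finite Q ->
  Lclass_lpoint c <> Lclass_lpoint d ->
  exists Y : MSet M, is_finite Y /\ exists f : Lclasses M -> Y,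
    (forall z m, f (Lact z m) = sact Y (f z) m) /\ f c <> f d.
Proof.
  intros HQ Hcd. exists lpoint_mset. split; [apply LPoint_finite, HQ|].
  exists Lclass_lpoint. split; [apply Lclass_lpoint_Lact | exact Hcd].
Qed.

End LPointAction.

Lemma Lact_residually_finite_of_quotient (G : Group) (N : G -> Prop)
    (HN : normal_subgroup G N) :
  residually_finite_group (quotient_group HN) ->
  @residually_finite_action (MGN G N) (Lclasses (MGN G N)) (@Lact (MGN G N)).
Proof.
  intros RF c d Hcd.
  assert (HL : ~ nf_Lrel G N (normal_form (rep c)) (normal_form (rep d))).
  { intro H. apply Hcd. rewrite <- (cls_rep c), <- (cls_rep d).
    apply Lclass_eq, (Lrel_normal_form HN), H. }
  assert (by_trivial : Lclass_lpoint trivial_group (fun _ => tt) c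
                       <> Lclass_lpoint trivial_group (fun _ => tt) d ->
    exists Y : MSet (MGN G N), is_finite Y /\ exists f : Lclasses (MGN G N) -> Y,
      (forall z m, f (Lact z m) = sact Y (f z) m) /\ f c <> f d).
  { apply (Lclasses_separated_by_lpoint HN (trivial_group_hom G));
      [reflexivity | apply trivial_group_finite]. }
  destruct (normal_form (rep c)) as [|g|g|g|] eqn:Ec,
           (normal_form (rep d)) as [|g'|g'|g'|] eqn:Ed;
    simpl in HL; try (exfalso; apply HL; exact I);
    try (apply by_trivial; unfold Lclass_lpoint; rewrite Ec, Ed; discriminate).
  assert (Hne : cls (cosrel G N) g <> cls (cosrel G N) g').
  { intro E. exact (HL (cls_inj (cosrel_refl HN) E)). }
  destruct (RF _ _ Hne) as (Q & HQ & f & f_hom & Hf).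
  apply (@Lclasses_separated_by_lpoint G N HN Q (fun k => f (cls (cosrel G N) k))).
  - intros a b. rewrite <- (qmul_cls HN). apply f_hom.
  - intros n Hn. rewrite (qcls_eq HN n gone); [apply (group_hom_one f_hom)|].
    unfold cosrel. rewrite gmul1r. apply (normal_inv HN), Hn.
  - exact HQ.
  - unfold Lclass_lpoint. rewrite Ec, Ed. simpl. intro E. injection E. exact Hf.
Qed.

Section CosetPoints.
Variables (G : Group) (N : G -> Prop).
Hypothesis HN : normal_subgroup G N.
Local Notation M := (MGN G N).
Variables (Y : MSet M) (f : Lclasses M -> Y).
Hypothesis f_equiv : forall z m, f (Lact z m) = sact Y (f z) m.

Definition hclass (k : G) : Lclasses M := cls (Lrel M) (of_normal_form G N (NH k)).
Definition coset_point (k : G) : Y := f (hclass k).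

Lemma hclass_cosrel k k' : cosrel G N k k' -> hclass k = hclass k'.
Proof.
  intro H. apply Lclass_eq, (Lrel_normal_form HN).
  rewrite !normal_form_of_normal_form by exact I. exact H.
Qed.

Lemma hclass_inj k k' : hclass k = hclass k' -> cosrel G N k k'.
Proof.
  intro E. apply Lclass_inj, (Lrel_normal_form HN) in E.
  rewrite !normal_form_of_normal_form in E by exact I. exact E.
Qed.

Lemma coset_point_act k r :
  sact Y (coset_point k) (of_normal_form G N (NG r)) = coset_point (gmul k r).
Proof.
  unfold coset_point, hclass. rewrite <- f_equiv, Lact_cls.
  rewrite <- (of_normal_form_mul HN); trivial; exact I.
Qed.

Definition coset_points := {y : Y | exists k, y = coset_point k}.

Definition coset_points_act (r : G) (z : coset_points) : coset_points.
Proof.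
  refine (exist _ (sact Y (proj1_sig z) (of_normal_form G N (NG r))) _).
  destruct z as [y [k ->]]. exists (gmul k r). apply coset_point_act.
Defined.

(* Right multiplication of G/N on the classes h(Ng), read off through [f]. *)
Definition quotient_act (p : quotient_group HN) : transformation_monoid coset_points :=
  coset_points_act (rep p).

Lemma quotient_act_mul p p' :
  quotient_act (gmul p p') = mmul (quotient_act p) (quotient_act p').
Proof.
  extensionality z. destruct z as [y [k Hk]]. apply subset_eq_compat. simpl. subst y.
  rewrite !coset_point_act, <- gassoc. unfold coset_point. f_equal.
  apply hclass_cosrel, cosrel_mul2l, (qrep_cls HN).
Qed.

End CosetPoints.

Lemma quotient_residually_finite_of_Lact (G : Group) (N : G -> Prop)
    (HN : normal_subgroup G N) :
  @residually_finite_action (MGN G N) (Lclasses (MGN G N)) (@Lact (MGN G N)) ->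
  residually_finite_group (quotient_group HN).
Proof.
  intro RF. apply residually_finite_group_of_mul_maps. intros p p' Hpp'.
  assert (Hcd : hclass G N (rep p) <> hclass G N (rep p')).
  { intro E. apply Hpp'. rewrite <- (cls_rep p), <- (cls_rep p').
    apply (qcls_eq HN), (hclass_inj HN), E. }
  destruct (RF _ _ Hcd) as (Y & HY & f & f_equiv & Hf).
  exists (transformation_monoid (coset_points Y f)).
  split; [apply is_finite_fun, is_finite_sig, HY|].
  exists (@quotient_act G N HN Y f f_equiv). split; [apply quotient_act_mul|].
  set (base := exist (fun y => exists k, y = coset_point Y f k) (coset_point Y f gone)
                 (ex_intro _ gone eq_refl)).
  intro E. apply (f_equal (fun F => proj1_sig (F base))) in E. simpl in E.
  rewrite !(coset_point_act HN Y f f_equiv), !gmul1l in E. exact (Hf E).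
Qed.

Theorem mainTheorem5 (G : Group) (N : G -> Prop) (HN : normal_subgroup G N) :
  (residually_finite_monoid (MGN G N) <-> residually_finite_group G) /\
  (@residually_finite_action (MGN G N) (Lclasses (MGN G N)) (@Lact (MGN G N))
     <-> residually_finite_group (@quotient_group G N HN)).
Proof.
  split.
  - apply MGN_residually_finite_iff, HN.
  - split.
    + apply quotient_residually_finite_of_Lact.
    + apply Lact_residually_finite_of_quotient.
Qed.
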